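(* For every integer $n>1$, $$c_n(231,1423 : 231)=c_n(312,2314 : 312)=\begin{cases}\frac{7}{3}\cdot 4^{k-1}-\frac{1}{3} & \text{if } n=2k,\\ \frac{14}{3}\cdot 4^{k-1}-\frac{2}{3} & \text{if } n=2k+1.\end{cases}$$
   Context: $S_n$ is the symmetric group on $[n]=\{1,\dots,n\}$, and a permutation $\pi\in S_n$ is written in one-line notation $\pi=\pi_1\pi_2\cdots\pi_n$ with $\pi_i=\pi(i)$. For $\tau\in S_k$, $k\le n$, $\pi$ contains $\tau$ if there are indices $i_1<\dots<i_k$ with $\pi_{i_s}>\pi_{i_t}$ iff $\tau_s>\tau_t$ for all $1\le s<t\le k$; otherwise $\pi$ avoids $\tau$. $\pi^2$ denotes the composition $\pi\circ\pi$. For patterns $\sigma_1,\sigma_2,\rho$, $c_n(\sigma_1,\sigma_2 : \rho)$ denotes the number of permutations $\pi\in S_n$ such that $\pi$ avoids both $\sigma_1$ and $\sigma_2$ and $\pi^2$ avoids $\rho$. *)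

From mathcomp Require Import all_boot all_order all_algebra all_fingroup.
Set Implicit Arguments. Unset Strict Implicit. Unset Printing Implicit Defensive.

(* Permutations of [n] are elements of 'S_n acting on 'I_n = {0,...,n-1};
   values are shifted by one with respect to the paper, which does not
   affect order-isomorphism.  A pattern tau in S_k is given by its one-line
   notation as a list of naturals [:: tau_1; ...; tau_k]. *)

Definition contains (n : nat) (pi : 'S_n) (tau : seq nat) : bool :=
  [exists f : {ffun 'I_(size tau) -> 'I_n},
    [forall s : 'I_(size tau), forall t : 'I_(size tau), (s < t) ==>
       ((f s < f t) &&
        ((pi (f t) < pi (f s)) == (nth 0 tau t < nth 0 tau s)))]].

Definition avoids (n : nat) (pi : 'S_n) (tau : seq nat) : bool :=
  ~~ contains pi tau.

Definition c_count (n : nat) (sigma1 sigma2 rho : seq nat) : nat :=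
  #|[set pi : 'S_n | [&& avoids pi sigma1, avoids pi sigma2
                      & avoids (pi * pi)%g rho]]|.

From mathcomp Require Import all_boot all_order all_algebra all_fingroup.
From mathcomp Require Import zify lra.
Set Implicit Arguments. Unset Strict Implicit. Unset Printing Implicit Defensive.

(* Call a permutation admissible if it avoids 231 and 1423 and its square
   avoids 231.  If the maximum of an admissible permutation sits at a position
   i > 0, avoiding 231 and 1423 forces it to be the direct sum of a
   permutation of [0, i) and a decreasing run, and admissibility only depends
   on the first summand.  Hence deleting the maximum maps the admissible
   permutations of [n+1] with maximum at position 0 < i < n bijectively onto
   the admissible permutations of [n] with maximum at position i, and those
   with maximum at position n onto all admissible permutations of [n].  With
   the maximum in front, the square condition leaves exactly the permutations
   (n-1, n-2, ..., r, 0, 1, ..., r-1) with 1 <= r <= n/2.  Summing over the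
   position of the maximum gives a(n+1) = 2 a(n) + [n odd] for n >= 2, and
   a(2) = 2; this recursion solves to the stated formula.  The second count
   is the same because conjugating by the reversal (reverse-complement) maps
   312 and 2314 to 231 and 1423 and commutes with squaring. *)

Lemma pigeonhole m (g : nat -> nat) :
  (forall x, x <= m -> g x < m) ->
  ~ (forall x y, x <= m -> y <= m -> g x = g y -> x = y).
Proof.
move=> g_lt g_inj.
pose G (x : 'I_m.+1) : 'I_m := Ordinal (g_lt x (ltn_ord x)).
have G_inj : injective G.
  by move=> x y /(congr1 val) /= /g_inj E; apply: val_inj; apply: E; rewrite -ltnS.
by have := leq_card G G_inj; rewrite !card_ord ltnn.
Qed.

Lemma inj_on_inverse N f :
  (forall x, x < N -> f x < N) ->
  (forall x y, x < N -> y < N -> f x = f y -> x = y) ->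
  exists2 g, (forall y, y < N -> g y < N) & (forall y, y < N -> f (g y) = y).
Proof.
move=> f_lt f_inj.
have f_onto y : y < N -> has (fun x => f x == y) (iota 0 N).
  move=> yN; pose F (x : 'I_N) : 'I_N := Ordinal (f_lt x (ltn_ord x)).
  have F_inj : injective F.
    by move=> a b /(congr1 val) /= /f_inj E; apply: val_inj; apply: E.
  have /codomP [x /(congr1 val) /= ->] := inj_card_onto F_inj (leqnn _) (Ordinal yN).
  by apply/hasP; exists (val x); rewrite // mem_iota /=.
exists (fun y => find (fun x => f x == y) (iota 0 N)) => y /f_onto;
  first by rewrite has_find size_iota.
move=> /[dup] /(nth_find 0) + /[!(has_find, size_iota)] lt_find.
by rewrite nth_iota // => /eqP.
Qed.

Lemma incr_on_id m h :
  (forall x y, x < y -> y < m -> h x < h y) -> (forall x, x < m -> h x < m) ->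
  forall x, x < m -> h x = x.
Proof.
move=> h_incr h_lt.
have h_ge x : x < m -> x <= h x.
  elim: x => [|x IHx] xm //; have := IHx (ltnW xm); have := h_incr x x.+1; lia.
have h_le k : k < m -> h (m.-1 - k) <= m.-1 - k.
  elim: k => [|k IHk] km; first by have := h_lt m.-1; rewrite subn0; lia.
  have := IHk (ltnW km); have := h_incr (m.-1 - k.+1) (m.-1 - k); lia.
move=> x xm; have := h_ge x xm; have := h_le (m.-1 - x).
have -> : m.-1 - (m.-1 - x) = x by lia.
lia.
Qed.

(** * Pattern avoidance for functions on [0, N) *)

Definition avoid231 (N : nat) (f : nat -> nat) : Prop :=
  forall i j k, i < j -> j < k -> k < N -> ~ (f k < f i /\ f i < f j).

Definition avoid1423 (N : nat) (f : nat -> nat) : Prop :=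
  forall i j k l, i < j -> j < k -> k < l -> l < N ->
    ~ (f i < f k /\ f k < f l /\ f l < f j).

Definition admissible (N : nat) (f : nat -> nat) : Prop :=
  [/\ avoid231 N f, avoid1423 N f & avoid231 N (f \o f)].

Lemma avoid231_subseq N M f g h :
  (forall x y, x < y -> y < M -> h x < h y) -> (forall x, x < M -> h x < N) ->
  (forall x, x < M -> g x = f (h x)) -> avoid231 N f -> avoid231 M g.
Proof.
move=> h_incr h_lt gE f231 i j k ij jk kM; rewrite !gE; try lia.
by apply: f231; [apply: h_incr; lia | apply: h_incr | apply: h_lt].
Qed.

Lemma avoid1423_subseq N M f g h :
  (forall x y, x < y -> y < M -> h x < h y) -> (forall x, x < M -> h x < N) ->
  (forall x, x < M -> g x = f (h x)) -> avoid1423 N f -> avoid1423 M g.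
Proof.
move=> h_incr h_lt gE f1423 i j k l ij jk kl lM; rewrite !gE; try lia.
by apply: f1423; [apply: h_incr; lia | apply: h_incr; lia | apply: h_incr | apply: h_lt].
Qed.

Lemma admissible_eq_on N f g :
  (forall x, x < N -> f x < N) -> (forall x, x < N -> f x = g x) ->
  admissible N f -> admissible N g.
Proof.
move=> f_lt fg [f231 f1423 ff231]; split.
- by apply: (avoid231_subseq (h := id)) f231 => // x xN; rewrite fg.
- by apply: (avoid1423_subseq (h := id)) f1423 => // x xN; rewrite fg.
- by apply: (avoid231_subseq (h := id)) ff231 => // x xN /=; rewrite -!fg ?f_lt.
Qed.

(** * Maximum at an inner position *)

Definition sum_decr (N i : nat) (f : nat -> nat) : Prop :=
  (forall x, x < i -> f x < i) /\
  (forall x, i <= x -> x < N -> f x = N.-1 - (x - i)).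

Section MaxSplit.

Variables (N i : nat) (f : nat -> nat).
Hypothesis f_lt : forall x, x < N -> f x < N.
Hypothesis f_inj : forall x y, x < N -> y < N -> f x = f y -> x = y.
Hypotheses (f231 : avoid231 N f) (f1423 : avoid1423 N f).
Hypotheses (i_gt0 : 0 < i) (i_ltN : i < N) (f_i : f i = N.-1).

Lemma before_max_lt_after x y : x < i -> i < y -> y < N -> f x < f y.
Proof.
move=> xi iy yN; have xN := ltn_trans xi i_ltN.
have := f231 xi iy yN; have := f_lt xN; have := f_inj xN yN; have := f_inj xN i_ltN.
rewrite f_i; lia.
Qed.

Lemma before_max_lt x : x < i -> f x < i.
Proof.
move=> xi; have xN := ltn_trans xi i_ltN.
rewrite ltnNge; apply/negP => fx_ge.
have [g g_lt fK] := inj_on_inverse f_lt f_inj.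
apply: (@pigeonhole i g) => [v vi | a b ai bi gab]; last first.
  by rewrite -(fK a) ?gab ?fK //; lia.
have vN : v < N by lia.
have := fK v vN; have := g_lt v vN; case: (ltngtP (g v) i) => // [ig | ->] gvN fgv.
- by have := before_max_lt_after xi ig gvN; lia.
- by have := f_inj xN i_ltN; have := f_lt xN; rewrite f_i in fgv; lia.
Qed.

Lemma after_max_ge y : i <= y -> y < N -> i <= f y.
Proof.
move=> iy yN; rewrite leqNgt; apply/negP => fy_lt.
have {}iy : i < y by case: (ltngtP i y) iy fy_lt => // <-; rewrite f_i; lia.
apply: (@pigeonhole i (fun v => f (if v < i then v else y))).
  by move=> v vi; case: ifP => // /before_max_lt.
move=> a b ai bi; case: ifP => ai'; case: ifP => bi' /f_inj; lia.
Qed.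

Lemma after_max_decr y w : i <= y -> y < w -> w < N -> f w < f y.
Proof.
move=> iy yw wN; have yN := ltn_trans yw wN.
have := f_inj wN yN; have := f_inj wN i_ltN; have := f_lt wN.
case: (ltngtP i y) iy yw => // [iy' _ yw | <- _ iw]; last by rewrite f_i; lia.
have := f1423 i_gt0 iy' yw wN; have := before_max_lt_after i_gt0 iy' yN.
rewrite f_i; lia.
Qed.

Lemma max_split : sum_decr N i f.
Proof.
split=> [|x ix xN]; first exact: before_max_lt.
pose h a := f (N.-1 - a) - i.
have h_id : forall a, a < N - i -> h a = a.
  apply: incr_on_id => [a b ab bNi | a aNi]; rewrite /h.
    have := after_max_decr (_ : i <= N.-1 - b) (_ : N.-1 - b < N.-1 - a).
    have := after_max_ge (_ : i <= N.-1 - a); lia.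
  by have := f_lt (_ : N.-1 - a < N); lia.
have := h_id (N.-1 - x); rewrite /h; have := after_max_ge ix xN.
have -> : N.-1 - (N.-1 - x) = x by lia.
lia.
Qed.

End MaxSplit.

Lemma admissible_sum_decr N i f :
  sum_decr N i f -> i <= N -> admissible N f <-> admissible i f.
Proof.
move=> [f_low f_high] iN.
have f_high_ge x : i <= x -> x < N -> i <= f x by move=> ix xN; rewrite f_high //; lia.
split=> [[f231 f1423 ff231] | [f231 f1423 ff231]].
  by split; [apply: (avoid231_subseq (h := id)) f231 | apply: (avoid1423_subseq (h := id)) f1423
    | apply: (avoid231_subseq (h := id)) ff231] => // x; lia.
split=> [a b c ab bc cN | a b c d ab bc cd dN | a b c ab bc cN /=].
- case: (ltnP c i) => ci; first exact: f231.
  case: (ltnP a i) => ai; first by have := f_low a ai; have := f_high_ge c ci cN; lia.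
  by rewrite !f_high //; lia.
- case: (ltnP d i) => di; first exact: f1423.
  case: (ltnP c i) => ci; first by have := f_low b (ltn_trans bc ci); have := f_high_ge d di dN; lia.
  by rewrite !(f_high c, f_high d) //; lia.
- case: (ltnP c i) => ci; first exact: ff231.
  have ffc : f (f c) = c by rewrite f_high ?f_high //; lia.
  case: (ltnP a i) => ai; first by have := f_low _ (f_low a ai); lia.
  by rewrite ffc !(f_high a) ?f_high //; lia.
Qed.

(** * Maximum in front *)

Definition decinc (N r x : nat) : nat :=
  if x < N - r then N.-1 - x else x - (N - r).

Lemma decinc_lt N r x : x < N -> decinc N r x < N.
Proof. by rewrite /decinc; case: ifP; lia. Qed.

Lemma decinc_inj N r x y : x < N -> y < N -> decinc N r x = decinc N r y -> x = y.
Proof. by rewrite /decinc; do 2 case: ifP; lia. Qed.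

Lemma decinc_decinc N r x : 2 * r <= N -> x < N ->
  decinc N r (decinc N r x) =
  if x < r then r.-1 - x else if x < N - r then x else N - r + N.-1 - x.
Proof. by move=> rN xN; rewrite /decinc; do !case: ifP; lia. Qed.

Lemma admissible_decinc N r : 2 * r <= N -> admissible N (decinc N r).
Proof.
move=> rN; split=> [a b c ab bc cN | a b c d ab bc cd dN | a b c ab bc cN /=].
- by rewrite /decinc; do !case: ifP; lia.
- by rewrite /decinc; do !case: ifP; lia.
- by rewrite !decinc_decinc //; try lia; do !case: ifP; lia.
Qed.

Section MaxFirst.

Variables (N d : nat) (f : nat -> nat).
Hypothesis f_lt : forall x, x < N -> f x < N.
Hypothesis f_inj : forall x y, x < N -> y < N -> f x = f y -> x = y.
Hypotheses (f231 : avoid231 N f) (f1423 : avoid1423 N f) (ff231 : avoid231 N (f \o f)).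
Hypotheses (d_gt0 : 0 < d) (d_ltN : d < N).
Hypothesis f_prefix : forall x, x < d -> f x = N.-1 - x.
Hypothesis f_d : f d <> N.-1 - d.

Lemma tail_lt x : d <= x -> x < N -> f x < N - d.
Proof.
move=> dx xN; rewrite ltnNge; apply/negP => fx_ge.
have := f_lt xN; have := @f_inj (N.-1 - f x) x; rewrite (@f_prefix (N.-1 - f x)); lia.
Qed.

Lemma tail_split : exists p, [/\ d < p, p < N,
  forall x, d <= x -> x < p -> f x < p - d &
  forall x, p <= x -> x < N -> f x = (N - d).-1 - (x - p)].
Proof.
have [g g_lt fK] := inj_on_inverse f_lt f_inj.
have pN : g (N - d).-1 < N by apply: g_lt; lia.
have fp := fK (N - d).-1 (_ : (N - d).-1 < N).
set p := g (N - d).-1 in pN fp *.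
have dp : d < p.
  case: (ltngtP d p) => // [pd | dp]; last by move: fp; rewrite -dp; have := f_d; lia.
  by move: fp; rewrite f_prefix; lia.
have [ft_low ft_high] : sum_decr (N - d) (p - d) (fun j => f (d + j)).
  apply: max_split.
  - by move=> j jNd; apply: tail_lt; lia.
  - by move=> j k jNd kNd /f_inj; lia.
  - by apply: (avoid231_subseq (h := addn d)) f231 => // *; lia.
  - by apply: (avoid1423_subseq (h := addn d)) f1423 => // *; lia.
  - lia.
  - lia.
  - by rewrite subnKC 1?ltnW // fp; lia.
exists p; split=> // [x dx xp | x px xN].
  by have := ft_low (x - d); rewrite subnKC //; lia.
by have := ft_high (x - d); rewrite subnKC //; lia.
Qed.

Variable p : nat.
Hypotheses (d_lt_p : d < p) (p_ltN : p < N).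
Hypothesis f_mid : forall x, d <= x -> x < p -> f x < p - d.
Hypothesis f_end : forall x, p <= x -> x < N -> f x = (N - d).-1 - (x - p).

Let f_first : f 0 = N.-1.
Proof. by rewrite f_prefix // subn0. Qed.

Let f_last : f N.-1 = p - d.
Proof. by rewrite f_end; lia. Qed.

Let f_p : f p = (N - d).-1.
Proof. by rewrite f_end // subnn subn0. Qed.

Lemma long_tail_absurd : d < N - d -> False.
Proof.
move=> d_lt_tail.
have [g g_lt fK] := inj_on_inverse f_lt f_inj.
have zN : g 0 < N by apply: g_lt; lia.
have fz := fK 0 (leq_ltn_trans (leq0n _) d_ltN).
set z := g 0 in zN fz.
have dz : d <= z by case: (ltnP z d) => // zd; move: fz; rewrite f_prefix; lia.
have zp : z < p by case: (ltnP z p) => // pz; move: fz; rewrite f_end; lia.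
(* [v] is a value of the decreasing run (taken at [w]) and a position of the
   middle block, so [f (f w) < p - d = f (f 0)]. *)
set v := maxn d (p - d); set w := p + (N - d).-1 - v.
have fw : f w = v by rewrite f_end; lia.
apply: (ff231 (_ : 0 < z) (_ : z < w) (_ : w < N)); rewrite /= ?fz ?fw ?f_first ?f_last; try lia.
have := f_mid (_ : d <= v) (_ : v < p); lia.
Qed.

Lemma tail_single_max : N - d <= d -> p = N.-1.
Proof.
move=> tail_le; case: (ltnP p N.-1) => [pN1 | ]; last lia.
have f_rev_p : f (N.-1 - p) = p by rewrite f_prefix; lia.
have f_rev_d : f (N.-1 - d) = d by rewrite f_prefix; lia.
have f_d_lt := f_mid (leqnn d) d_lt_p.
exfalso; apply: (ff231 (_ : 0 < N.-1 - p) (_ : N.-1 - p < N.-1 - d) (_ : N.-1 - d < N));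
  rewrite /= ?f_first ?f_last ?f_rev_p ?f_rev_d ?f_p; lia.
Qed.

Lemma tail_identity : N - d <= d -> forall x, d <= x -> x < N -> f x = x - d.
Proof.
move=> tail_le; have p_last := tail_single_max tail_le.
have f_rev_d : f (N.-1 - d) = d by rewrite f_prefix; lia.
have f_incr j k : j < k -> k < N - d -> f (d + j) < f (d + k).
  move=> jk kNd; have fj := f_mid (_ : d <= d + j) (_ : d + j < p).
  case: (ltnP (d + k) N.-1) => kN1; last by rewrite (_ : d + k = N.-1) ?f_last; lia.
  have fk := f_mid (_ : d <= d + k) (_ : d + k < p).
  have := f_inj (_ : d + j < N) (_ : d + k < N).
  have := ff231 (_ : d + j < d + k) kN1 (_ : N.-1 < N).
  rewrite /= f_last p_last f_rev_d (@f_prefix (f (d + j))) ?(@f_prefix (f (d + k))); lia.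
move=> x dx xN; have := @incr_on_id (N - d) (fun j => f (d + j)) f_incr _ (x - d).
by rewrite /= subnKC //; apply=> [j jNd|]; [apply: tail_lt | ]; lia.
Qed.

End MaxFirst.

Lemma max_first_decinc N f :
  (forall x, x < N -> f x < N) ->
  (forall x y, x < N -> y < N -> f x = f y -> x = y) ->
  1 < N -> admissible N f -> f 0 = N.-1 ->
  exists2 r, 0 < r /\ 2 * r <= N & forall x, x < N -> f x = decinc N r x.
Proof.
move=> f_lt f_inj N_gt1 [f231 f1423 ff231] f_0.
have exP : exists d, (N <= d) || (f d != N.-1 - d) by exists N; rewrite leqnn.
have [d d_brk d_min] := ex_minnP exP.
have f_prefix x : x < d -> f x = N.-1 - x.
  by move=> xd; apply: contraTeq xd => fx; rewrite -leqNgt d_min // fx orbT.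
have d_gt0 : 0 < d.
  by rewrite lt0n; apply: contraTneq d_brk => ->; rewrite f_0 subn0 eqxx orbF; lia.
case: (ltnP d N) => [d_ltN | d_geN]; last first.
  by exists 1 => [|x xN]; [lia | rewrite /decinc f_prefix; [case: ifP|]; lia].
have f_d : f d <> N.-1 - d by move: d_brk; rewrite leqNgt d_ltN => /eqP.
have [p [dp pN f_mid f_end]] := tail_split f_lt f_inj f231 f1423 d_gt0 d_ltN f_prefix f_d.
case: (leqP (N - d) d) => [tail_le | tail_gt].
  exists (N - d) => [|x xN]; first lia.
  rewrite /decinc (subKn (ltnW d_ltN)); case: ifP => xd; first exact: f_prefix.
  by apply: (tail_identity f_lt f_inj ff231 d_gt0 d_ltN f_prefix f_d dp pN f_mid f_end); lia.
by case: (long_tail_absurd f_lt f_inj ff231 d_gt0 d_ltN f_prefix f_d dp pN f_mid f_end tail_gt).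
Qed.

(** * Permutations as functions on [nat] *)

(* Working with the induced function on [nat] lets [lia] handle positions and
   values directly. *)
Definition pfun n (t : 'S_n) (x : nat) : nat :=
  if insub x is Some i then val (t i) else x.

Lemma pfunE n (t : 'S_n) (i : 'I_n) : pfun t i = t i.
Proof. by rewrite /pfun valK. Qed.

Lemma pfun_ord n (t : 'S_n) x (xn : x < n) : pfun t x = t (Ordinal xn).
Proof. by rewrite -pfunE. Qed.

Lemma pfun_lt n (t : 'S_n) x : x < n -> pfun t x < n.
Proof. by move=> xn; rewrite (pfun_ord t xn). Qed.

Lemma pfun_inj n (t : 'S_n) x y : x < n -> y < n -> pfun t x = pfun t y -> x = y.
Proof.
by move=> xn yn; rewrite (pfun_ord t xn) (pfun_ord t yn) => /val_inj /perm_inj [].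
Qed.

Lemma pfunM n (s t : 'S_n) x : x < n -> pfun (s * t)%g x = pfun t (pfun s x).
Proof. by move=> xn; rewrite (pfun_ord _ xn) (pfun_ord s xn) pfunE permM. Qed.

Lemma contains3E n (t : 'S_n) a b c :
  contains t [:: a; b; c] =
  [exists i : 'I_n, exists j : 'I_n, exists k : 'I_n,
    [&& i < j, j < k, (t j < t i) == (b < a), (t k < t i) == (c < a)
      & (t k < t j) == (c < b)]].
Proof.
apply/existsP/existsP => [[F /forallP F_ok] | [i /existsP [j /existsP [k]]]].
  pose o0 := @Ordinal 3 0 isT; pose o1 := @Ordinal 3 1 isT; pose o2 := @Ordinal 3 2 isT.
  have F_lt s u := implyP (forallP (F_ok s) u).
  case/andP: (F_lt o0 o1 isT) => F01 c01; case/andP: (F_lt o0 o2 isT) => _ c02.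
  case/andP: (F_lt o1 o2 isT) => F12 c12.
  exists (F o0); apply/existsP; exists (F o1); apply/existsP; exists (F o2).
  by rewrite F01 F12 c01 c02 c12.
case/and5P=> ij jk c01 c02 c12; exists [ffun s : 'I_3 => nth i [:: i; j; k] s].
apply/forallP => -[[|[|[|?]]] ?]; apply/forallP => -[[|[|[|?]]] ?] //=;
  by rewrite !ffunE /= ?ij ?jk ?c01 ?c02 ?c12 ?(ltn_trans ij jk).
Qed.

Lemma contains4E n (t : 'S_n) a b c d :
  contains t [:: a; b; c; d] =
  [exists i : 'I_n, exists j : 'I_n, exists k : 'I_n, exists l : 'I_n,
    [&& i < j, j < k, k < l,
      [&& (t j < t i) == (b < a), (t k < t i) == (c < a) & (t l < t i) == (d < a)]
      & [&& (t k < t j) == (c < b), (t l < t j) == (d < b) & (t l < t k) == (d < c)]]].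
Proof.
apply/existsP/existsP => [[F /forallP F_ok] | [i /existsP [j /existsP [k /existsP [l]]]]].
  pose o0 := @Ordinal 4 0 isT; pose o1 := @Ordinal 4 1 isT.
  pose o2 := @Ordinal 4 2 isT; pose o3 := @Ordinal 4 3 isT.
  have F_lt s u := implyP (forallP (F_ok s) u).
  case/andP: (F_lt o0 o1 isT) => F01 c01; case/andP: (F_lt o0 o2 isT) => _ c02.
  case/andP: (F_lt o0 o3 isT) => _ c03; case/andP: (F_lt o1 o2 isT) => F12 c12.
  case/andP: (F_lt o1 o3 isT) => _ c13; case/andP: (F_lt o2 o3 isT) => F23 c23.
  exists (F o0); apply/existsP; exists (F o1); apply/existsP; exists (F o2).
  by apply/existsP; exists (F o3); rewrite F01 F12 F23 c01 c02 c03 c12 c13 c23.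
case/and5P=> ij jk kl /and3P [c01 c02 c03] /and3P [c12 c13 c23].
exists [ffun s : 'I_4 => nth i [:: i; j; k; l] s].
have ik := ltn_trans ij jk; have jl := ltn_trans jk kl; have il := ltn_trans ik kl.
apply/forallP => -[[|[|[|[|?]]]] ?]; apply/forallP => -[[|[|[|[|?]]]] ?] //=;
  by rewrite !ffunE /= ?ij ?jk ?kl ?ik ?jl ?il ?c01 ?c02 ?c03 ?c12 ?c13 ?c23.
Qed.

Lemma perm_nat_neq n (t : 'S_n) (i j : 'I_n) : i < j -> t i != t j :> nat.
Proof. by move=> ij; apply/eqP => /val_inj /perm_inj eq_ij; rewrite eq_ij ltnn in ij. Qed.

Lemma avoid231P n (t : 'S_n) : reflect (avoid231 n (pfun t)) (avoids t [:: 2; 3; 1]).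
Proof.
rewrite /avoids contains3E; apply: (iffP idP) => [t231 i j k ij jk kn | t231].
  have jn := ltn_trans jk kn; have iN := ltn_trans ij jn.
  rewrite (pfun_ord t kn) (pfun_ord t jn) (pfun_ord t iN) => -[ki ij'].
  move/negP: t231; apply; apply/existsP; exists (Ordinal iN).
  apply/existsP; exists (Ordinal jn); apply/existsP; exists (Ordinal kn).
  by apply/and5P; split=> //; apply/eqP => /=; lia.
apply/existsP => -[i /existsP [j /existsP [k /and5P [ij jk /eqP c01 /eqP c02 /eqP c12]]]].
apply: (t231 i j k ij jk (ltn_ord k)); rewrite !pfunE.
by have := perm_nat_neq t ij; move: c01 c02 c12 => /=; lia.
Qed.

Lemma avoid1423P n (t : 'S_n) :
  reflect (avoid1423 n (pfun t)) (avoids t [:: 1; 4; 2; 3]).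
Proof.
rewrite /avoids contains4E; apply: (iffP idP) => [t1423 i j k l ij jk kl ln | t1423].
  have kn := ltn_trans kl ln; have jn := ltn_trans jk kn; have iN := ltn_trans ij jn.
  rewrite (pfun_ord t ln) (pfun_ord t kn) (pfun_ord t jn) (pfun_ord t iN) => -[ik [kl' lj]].
  move/negP: t1423; apply; apply/existsP; exists (Ordinal iN).
  apply/existsP; exists (Ordinal jn); apply/existsP; exists (Ordinal kn).
  apply/existsP; exists (Ordinal ln).
  by apply/and5P; split=> //; apply/and3P; split; apply/eqP => /=; lia.
apply/existsP => -[i /existsP [j /existsP [k /existsP [l]]]].
case/and5P=> ij jk kl /and3P [/eqP c01 /eqP c02 /eqP c03] /and3P [/eqP c12 /eqP c13 /eqP c23].
apply: (t1423 i j k l ij jk kl (ltn_ord l)); rewrite !pfunE.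
have ik := ltn_trans ij jk; have jl := ltn_trans jk kl; have il := ltn_trans ik kl.
have := perm_nat_neq t ij; have := perm_nat_neq t jk; have := perm_nat_neq t kl.
have := perm_nat_neq t ik; have := perm_nat_neq t jl; have := perm_nat_neq t il.
by move: c01 c02 c03 c12 c13 c23 => /=; lia.
Qed.

Definition adm n : {set 'S_n} :=
  [set t | [&& avoids t [:: 2; 3; 1], avoids t [:: 1; 4; 2; 3]
             & avoids (t * t)%g [:: 2; 3; 1]]].

Lemma admP n (t : 'S_n) : reflect (admissible n (pfun t)) (t \in adm n).
Proof.
have tt_E : forall x, x < n -> pfun (t * t)%g x = (pfun t \o pfun t) x.
  by move=> x xn; rewrite pfunM.
rewrite inE; apply: (iffP and3P) =>
  [[/avoid231P t231 /avoid1423P t1423 /avoid231P tt231] | [t231 t1423 tt231]].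
  split=> //; apply: (avoid231_subseq (h := id)) tt231 => // x xn.
  by rewrite tt_E.
split; [exact/avoid231P | exact/avoid1423P | apply/avoid231P].
by apply: (avoid231_subseq (h := id)) tt231 => // x xn; rewrite tt_E.
Qed.

(** * Counting by the position of the maximum *)

Lemma pfun_lift n (i : 'I_n.+1) (s : 'S_n) x : x < n.+1 ->
  pfun (lift_perm i ord_max s) x =
  if x < i then pfun s x else if x == i then n else pfun s x.-1.
Proof.
move=> xn; rewrite (pfun_ord _ xn).
case: (unliftP i (Ordinal xn)) => [k | ] /(congr1 val) /= x_E; last first.
  by rewrite (_ : Ordinal xn = i) ?lift_perm_id ?x_E ?ltnn ?eqxx //; apply: val_inj.
rewrite (_ : Ordinal xn = lift i k) ?lift_perm_lift; last exact: val_inj.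
rewrite lift_max x_E /bump -pfunE; case: (leqP i k) => ik; rewrite ?add0n ?ik //.
by rewrite add1n ltnNge (leqW ik) (gtn_eqF (ik : i < k.+1)).
Qed.

Lemma lift_perm_pair_inj n :
  injective (fun p : 'I_n.+1 * 'S_n => lift_perm p.1 ord_max p.2).
Proof.
move=> [i1 s1] [i2 s2] /= lift_E.
have i_E : i1 = i2 by apply: (@perm_inj _ (lift_perm i1 ord_max s1));
  rewrite lift_perm_id lift_E lift_perm_id.
subst i2; congr (_, _); apply/permP => k; apply: (@lift_inj _ ord_max).
by rewrite -(lift_perm_lift i1 ord_max s1 k) lift_E lift_perm_lift.
Qed.

Lemma card_lift_perm_max n (i : 'I_n.+1) (A : {set 'S_n.+1}) :
  #|[set t in A | t i == ord_max]| = #|[set s : 'S_n | lift_perm i ord_max s \in A]|.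
Proof.
have lift_onto t : exists p : 'I_n.+1 * 'S_n, t = lift_perm p.1 ord_max p.2.
  have card_le : #|'S_n.+1| <= #|{: 'I_n.+1 * 'S_n}|.
    by rewrite card_prod card_ord !card_Sn factS.
  by have /codomP := inj_card_onto (@lift_perm_pair_inj n) card_le t.
have lift_inj : injective (lift_perm i ord_max).
  by move=> s1 s2 E; case: (@lift_perm_pair_inj n (i, s1) (i, s2) E).
rewrite -(card_imset _ lift_inj).
apply: eq_card => t; rewrite inE; apply/andP/imsetP => [[tA /eqP ti] | [s]].
  have [[j s] /= t_E] := lift_onto t.
  have j_E : j = i by apply: (@perm_inj _ t); rewrite ti t_E lift_perm_id.
  by exists s; rewrite ?inE -j_E -t_E.
by rewrite inE => sA ->; rewrite lift_perm_id.
Qed.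

Lemma admissible_sum_decr_eq N M i f g :
  sum_decr N i f -> sum_decr M i g -> i <= N -> i <= M ->
  (forall x, x < i -> f x = g x) -> admissible N f -> admissible M g.
Proof.
move=> f_sum g_sum iN iM fg /(admissible_sum_decr f_sum iN) f_adm.
by apply/(admissible_sum_decr g_sum iM); apply: admissible_eq_on f_adm => //; case: f_sum.
Qed.

Lemma sum_decr_pfun n (s : 'S_n) : sum_decr n n (pfun s).
Proof. by split=> [x /pfun_lt | x nx xn] //; lia. Qed.

Lemma adm_lift_last n (s : 'S_n) :
  (lift_perm ord_max ord_max s \in adm n.+1) = (s \in adm n).
Proof.
pose f := pfun (lift_perm ord_max ord_max s).
have f_low x : x < n -> f x = pfun s x.
  by move=> xn; rewrite /f pfun_lift /= ?xn //; lia.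
have f_sum : sum_decr n.+1 n f.
  split=> [x xn | x nx xn]; first by rewrite f_low ?pfun_lt.
  by rewrite (_ : x = n) 1?/f ?pfun_lift //= ?ltnn ?eqxx; lia.
apply/admP/admP; [apply: admissible_sum_decr_eq f_sum (sum_decr_pfun s) _ _ _
  | apply: admissible_sum_decr_eq (sum_decr_pfun s) f_sum _ _ _] => // x /f_low //.
Qed.

Lemma adm_lift_inner n (i : 'I_n.+1) (s : 'S_n) : 0 < i < n ->
  (lift_perm i ord_max s \in adm n.+1) = (s \in adm n) && (pfun s i == n.-1).
Proof.
case/andP=> i_gt0 i_ltn; have i_ltn1 := ltn_trans i_ltn (ltnSn n).
pose f := pfun (lift_perm i ord_max s).
have f_low x : x < i -> f x = pfun s x by move=> xi; rewrite /f pfun_lift ?xi //; lia.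
have f_i : f i = n by rewrite /f pfun_lift // ltnn eqxx.
have f_high x : i < x -> x < n.+1 -> f x = pfun s x.-1.
  by move=> ix xn; rewrite /f pfun_lift // ifF ?ifF //; lia.
have sum_decr_shift : sum_decr n.+1 i f <-> sum_decr n i (pfun s).
  split=> -[low high]; split=> [x xi | x ix xn].
  - by rewrite -f_low ?low.
  - by move: (high x.+1); rewrite f_high /=; lia.
  - by rewrite f_low ?low.
  - case: (ltngtP i x) ix => // [ix' _ | <- _]; last by rewrite subnn subn0; apply: f_i.
    by move: (high x.-1); rewrite f_high //; lia.
apply/admP/andP => [f_adm | [/admP s_adm /eqP s_i]].
  have [f231 f1423 _] := f_adm.
  have f_sum := max_split (@pfun_lt _ _) (@pfun_inj _ _) f231 f1423 i_gt0 i_ltn1 f_i.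
  have s_sum := sum_decr_shift.1 f_sum.
  split; last by case: s_sum => _ -> //; rewrite subnn subn0.
  by apply/admP; apply: admissible_sum_decr_eq f_sum s_sum _ _ f_low f_adm; lia.
have [s231 s1423 _] := s_adm.
have s_sum := max_split (@pfun_lt _ _) (@pfun_inj _ _) s231 s1423 i_gt0 i_ltn s_i.
apply: admissible_sum_decr_eq s_sum (sum_decr_shift.2 s_sum) _ _ _ s_adm; try lia.
by move=> x /f_low.
Qed.

Definition max_at n i : {set 'S_n} := [set t in adm n | pfun t i == n.-1].

Lemma card_adm_partition n :
  #|adm n.+1| = \sum_(0 <= i < n.+1) #|max_at n.+1 i|.
Proof.
rewrite -sum1_card (partition_big (fun t : 'S_n.+1 => (t^-1)%g ord_max) xpredT) //=.
rewrite big_mkord; apply: eq_bigr => i _; rewrite -sum1_card; apply: eq_bigl => t.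
rewrite !inE pfunE; congr andb; apply/eqP/eqP => [<- | t_i]; first by rewrite permKV.
by apply: (@perm_inj _ t); rewrite permKV; apply: val_inj; rewrite /= t_i.
Qed.

Lemma max_atE n (i : 'I_n.+1) : max_at n.+1 i = [set t in adm n.+1 | t i == ord_max].
Proof. by apply/setP => t; rewrite !inE pfunE. Qed.

Lemma card_max_at_last n : #|max_at n.+1 n| = #|adm n|.
Proof.
rewrite (max_atE ord_max) card_lift_perm_max.
by apply: eq_card => s; rewrite inE adm_lift_last.
Qed.

Lemma card_max_at_inner n i : 0 < i < n -> #|max_at n.+1 i| = #|max_at n i|.
Proof.
move=> i_bounds; have i_ltn1 : i < n.+1 by lia.
rewrite (max_atE (Ordinal i_ltn1)) card_lift_perm_max.
by apply: eq_card => s; rewrite in_set adm_lift_inner // [RHS]inE.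
Qed.

Definition decinc_ord n r (x : 'I_n) : 'I_n := Ordinal (decinc_lt r (ltn_ord x)).

Lemma decinc_ord_inj n r : injective (@decinc_ord n r).
Proof. by move=> x y /(congr1 val) /= /decinc_inj E; apply: val_inj; apply: E. Qed.

Definition decinc_perm n r : 'S_n := perm (@decinc_ord_inj n r).

Lemma pfun_decinc_perm n r x : x < n -> pfun (decinc_perm n r) x = decinc n r x.
Proof. by move=> xn; rewrite (pfun_ord _ xn) permE. Qed.

Lemma card_max_at_first n : 1 < n -> #|max_at n 0| = n./2.
Proof.
move=> n_gt1.
have half_bound (r : 'I_n./2) : 2 * r.+1 <= n by rewrite mul2n -geq_half_double.
have decinc_inj_r : injective (fun r : 'I_n./2 => decinc_perm n r.+1).
  move=> r1 r2 /(congr1 (fun t => pfun t n.-1)) r_E; apply: ord_inj; move: r_E.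
  have := half_bound r1; have := half_bound r2.
  by rewrite !pfun_decinc_perm /decinc; [do 2 case: ifP | lia..]; lia.
rewrite -[n./2]card_ord -cardsT -(card_imset _ decinc_inj_r); apply: eq_card => t.
rewrite inE; apply/andP/imsetP => [[/admP t_adm /eqP t_0] | [r _ ->]].
  have [r [r_gt0 r_le] t_E] :=
    max_first_decinc (@pfun_lt _ t) (@pfun_inj _ t) n_gt1 t_adm t_0.
  have r_lt : r.-1 < n./2 by rewrite prednK // geq_half_double -mul2n.
  exists (Ordinal r_lt); rewrite ?inE //.
  by apply/permP => x; apply: ord_inj; rewrite -!pfunE t_E // pfun_decinc_perm // prednK.
split; last by have := half_bound r; rewrite pfun_decinc_perm /decinc; [case: ifP | ]; lia.
apply/admP; apply: admissible_eq_on (admissible_decinc (half_bound r)) => x xn.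
  exact: decinc_lt.
by rewrite pfun_decinc_perm.
Qed.

Lemma card_adm_rec n : 1 < n -> #|adm n.+1| = #|adm n|.*2 + odd n.
Proof.
case: n => [//|m] m_gt0.
have inner : \sum_(0 <= i < m) #|max_at m.+2 i.+1| = \sum_(0 <= i < m) #|max_at m.+1 i.+1|.
  by apply: eq_big_nat => i /andP [_ im]; rewrite card_max_at_inner.
have := card_adm_partition m; rewrite big_nat_recl // card_max_at_first //= uphalf_half.
rewrite (card_adm_partition m.+1) big_nat_recl // big_nat_recr //= inner.
by rewrite card_max_at_last card_max_at_first //=; case: (odd m); lia.
Qed.

Lemma card_adm2 : #|adm 2| = 2.
Proof.
have -> : adm 2 = setT.
  by apply/setP => t; rewrite in_setT; apply/admP; split=> [i j k | i j k l | i j k]; lia.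
by rewrite cardsT card_Sn.
Qed.

Lemma card_adm_closed k :
  3 * #|adm k.*2.+2| + 1 = 7 * 4 ^ k /\ 3 * #|adm k.*2.+3| + 2 = 14 * 4 ^ k.
Proof.
elim: k => [|k [_ IHodd]]; first by rewrite double0 (@card_adm_rec 2) // card_adm2.
rewrite doubleS (@card_adm_rec k.*2.+4) ?(@card_adm_rec k.*2.+3) //= odd_double /=.
by rewrite expnS; move: IHodd; set a := #|adm _|; split; lia.
Qed.

(** * Reverse-complement *)

Definition perm_rev n : 'S_n := perm (@rev_ord_inj n).

Definition conj_rev n (t : 'S_n) : 'S_n := (perm_rev n * t * perm_rev n)%g.

Lemma conj_revE n (t : 'S_n) x : conj_rev t x = rev_ord (t (rev_ord x)).
Proof. by rewrite !permM !permE. Qed.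

Lemma conj_revK n : involutive (@conj_rev n).
Proof.
have rr : (perm_rev n * perm_rev n = 1)%g by apply/permP => x; rewrite permM !permE rev_ordK.
by move=> t; rewrite /conj_rev !mulgA rr mul1g -!mulgA rr mulg1.
Qed.

Lemma conj_revM n (s t : 'S_n) : conj_rev (s * t)%g = (conj_rev s * conj_rev t)%g.
Proof. by apply/permP => x; rewrite permM !conj_revE permM rev_ordK. Qed.

Lemma contains_conj_rev_impl n (t : 'S_n) tau M : all (fun x => x <= M) tau ->
  contains (conj_rev t) tau -> contains t (map (subn M) (rev tau)).
Proof.
move=> /allP tau_le /existsP [F /forallP F_ok].
have size_rc : size (map (subn M) (rev tau)) = size tau by rewrite size_map size_rev.
apply/existsP; exists [ffun s => rev_ord (F (rev_ord (cast_ord size_rc s)))].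
apply/forallP => s; apply/forallP => u; apply/implyP => su; rewrite !ffunE.
set s' := rev_ord (cast_ord size_rc s); set u' := rev_ord (cast_ord size_rc u).
have us' : u' < s' by have := size_rc; move: (ltn_ord s) (ltn_ord u) su => /=; lia.
have /andP [F_lt /eqP c_E] := implyP (forallP (F_ok u') s') us'.
apply/andP; split; first by rewrite /= ltn_sub2lE ?ltnS.
have u_lt : u < size tau by rewrite -size_rc.
have s_lt : s < size tau by rewrite -size_rc.
move: c_E; rewrite !conj_revE /= ltn_sub2lE // ltnS => ->.
rewrite !(nth_map 0) ?size_rev // !nth_rev // ltn_sub2lE ?tau_le ?mem_nth //.
by rewrite ltn_subrL (leq_ltn_trans (leq0n u) u_lt).
Qed.

Lemma contains_conj_rev n (t : 'S_n) tau M : all (fun x => x <= M) tau ->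
  contains (conj_rev t) tau = contains t (map (subn M) (rev tau)).
Proof.
move=> tau_le; apply/idP/idP; first exact: contains_conj_rev_impl.
have rc_le : all (fun x => x <= M) (map (subn M) (rev tau)).
  by apply/allP => x /mapP [y _ ->]; apply: leq_subr.
have rcK : map (subn M) (rev (map (subn M) (rev tau))) = tau.
  rewrite map_rev -map_comp map_rev revK map_id_in // => x /(allP tau_le) /= xM.
  exact: subKn.
by rewrite -{1}(conj_revK t) => /(contains_conj_rev_impl rc_le); rewrite rcK.
Qed.

Lemma card_adm_conj_rev n :
  c_count n [:: 3; 1; 2] [:: 2; 3; 1; 4] [:: 3; 1; 2] = #|adm n|.
Proof.
rewrite /c_count -(card_preimset _ (can_inj (@conj_revK n))).
apply: eq_card => t; rewrite !inE /avoids -conj_revM.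
by rewrite (@contains_conj_rev _ _ [:: 2; 3; 1; 4] 5) // !(@contains_conj_rev _ _ _ 4).
Qed.

Import GRing.Theory.
Local Open Scope ring_scope.

Theorem theorem4p2 (n : nat) : (1 < n)%N ->
  let f : rat :=
    if ~~ odd n then 7%:R / 3%:R * 4%:R ^+ (n./2).-1 - 1 / 3%:R
    else 14%:R / 3%:R * 4%:R ^+ (n./2).-1 - 2%:R / 3%:R in
  (c_count n [:: 2; 3; 1]%N [:: 1; 4; 2; 3]%N [:: 2; 3; 1]%N)%:R = f /\
  (c_count n [:: 3; 1; 2]%N [:: 2; 3; 1; 4]%N [:: 3; 1; 2]%N)%:R = f.
Proof.
move=> n_gt1 f; rewrite card_adm_conj_rev.
suff card_E : #|adm n|%:R = f by split.
have [k [n_E | n_E]] : exists k, n = k.*2.+2 \/ n = k.*2.+3.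
  by exists (n./2).-1; move: (odd_double_half n); case: (odd n) => /=; lia.
- have := congr1 (fun m => m%:R : rat) (card_adm_closed k).1.
  rewrite /f n_E /= odd_double doubleK /= natrD !natrM natrX => card_k.
  lra.
- have := congr1 (fun m => m%:R : rat) (card_adm_closed k).2.
  rewrite /f n_E /= odd_double uphalf_double /= natrD !natrM natrX => card_k.
  lra.
Qed.
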